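(* Let $$C= \begin{pmatrix} -1& 2& 2\\ -2&1& 2\\ -2&2& 3 \end{pmatrix}.$$ For every positive integer $n$, writing $C^n(3,4,5)^\top=(x,y,z)^\top$, the inradius of the triangle with side lengths $x,y,z$ is $2n+1$.
   Context: Triples are regarded as row vectors and $\top$ denotes transpose. The triple $C^n(3,4,5)^\top$ is a primitive Pythagorean triple (positive integers $x,y,z$ with $x^2+y^2=z^2$), so the triangle is a right triangle with hypotenuse $z$. *)

From mathcomp Require Import all_boot all_order all_algebra.
Set Implicit Arguments. Unset Strict Implicit. Unset Printing Implicit Defensive.
Import Order.TTheory GRing.Theory Num.Theory.
Local Open Scope ring_scope.

Definition Cmat : 'M[int]_3 :=
  \matrix_(i < 3, j < 3)
    nth 0 (nth [::] [:: [:: -1; 2; 2]; [:: -2; 1; 2]; [:: -2; 2; 3]] i) j.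

Definition v345 : 'cV[int]_3 := \col_(i < 3) nth 0 [:: 3; 4; 5] i.

Definition semiper (R : rcfType) (a b c : R) : R := (a + b + c) / 2.
Definition area (R : rcfType) (a b c : R) : R :=
  let s := semiper a b c in Num.sqrt (s * (s - a) * (s - b) * (s - c)).
Definition inradius (R : rcfType) (a b c : R) : R := area a b c / semiper a b c.

(* C maps the primitive triple ((2n+1)(2n+3), 4(n+1), (2n+1)(2n+3) + 2) to
   the one with n+1, and (3,4,5) is the case n = 0.  For a right triangle with
   legs x, y and hypotenuse z, Heron's formula gives the area xy/2, so the
   inradius is xy/(x+y+z) = (x+y-z)/2, which is 2n+1 on this family. *)

From mathcomp Require Import all_boot all_order all_algebra.
From mathcomp Require Import ring lra zify.
Import Order.TTheory GRing.Theory Num.Theory.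
Local Open Scope ring_scope.

Definition triple_col (n : nat) : 'cV[int]_3 :=
  \col_(i < 3)
    nth 0 [:: (4 * n ^ 2 + 8 * n + 3)%:Z; (4 * n + 4)%:Z;
              (4 * n ^ 2 + 8 * n + 5)%:Z] i.

Lemma v345_triple_col : v345 = triple_col 0.
Proof. by apply/matrixP => -[[|[|[|i]]] Hi] j; rewrite !mxE. Qed.

Lemma Cmat_mul_triple_col (n : nat) : Cmat *m triple_col n = triple_col n.+1.
Proof.
apply/matrixP => i j; rewrite !mxE !big_ord_recr big_ord0 /= !mxE /=.
by case: i => -[|[|[|i]]] Hi //=; rewrite ?mxE /=; lia.
Qed.

Lemma Cmat_exp_mul_v345 (n : nat) : Cmat ^+ n *m v345 = triple_col n.
Proof.
elim: n => [|n IHn]; first by rewrite expr0 mul1mx v345_triple_col.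
by rewrite exprS -mulmxA IHn Cmat_mul_triple_col.
Qed.

Section RightTriangle.
Variable R : rcfType.

Lemma heron_productE (a b c : R) :
  let s := semiper a b c in
  s * (s - a) * (s - b) * (s - c) =
  ((2 * a * b) ^+ 2 - (a ^+ 2 + b ^+ 2 - c ^+ 2) ^+ 2) / 16.
Proof. by rewrite /semiper; field. Qed.

Variables x y z : R.
Hypotheses (x_ge0 : 0 <= x) (y_ge0 : 0 <= y) (z_gt0 : 0 < z).
Hypothesis pythagoras : x ^+ 2 + y ^+ 2 = z ^+ 2.

Lemma area_right_triangle : area x y z = x * y / 2.
Proof.
rewrite /area heron_productE pythagoras subrr expr0n /= subr0.
have -> : (2 * x * y) ^+ 2 / 16 = (x * y / 2) ^+ 2 by field.
by rewrite sqrtr_sqr ger0_norm // divr_ge0 ?mulr_ge0.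
Qed.

Lemma inradius_right_triangle : inradius x y z = (x + y - z) / 2.
Proof.
have s_neq0 : semiper x y z != 0 by rewrite /semiper lt0r_neq0 // divr_gt0 // ltr_wpDl ?addr_ge0.
rewrite /inradius area_right_triangle; apply: (mulIf s_neq0); rewrite divfK //.
have -> : (x + y - z) / 2 * semiper x y z = ((x + y) ^+ 2 - z ^+ 2) / 4.
  by rewrite /semiper; field.
by rewrite -pythagoras; field.
Qed.

End RightTriangle.

Theorem mainTheorem5 (R : rcfType) (n : nat) : (0 < n)%N ->
  let w := Cmat ^+ n *m v345 in
  inradius ((w 0 0)%:~R : R) ((w 1 0)%:~R) ((w 2 0)%:~R) = (2 * n + 1)%:R.
Proof.
(* The formula also holds for n = 0: (3,4,5) has inradius 1. *)
move=> _ w; rewrite /w Cmat_exp_mul_v345 !mxE /=.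
rewrite -!pmulrn !natrD !natrM.
set m : R := n%:R; have m_ge0 : 0 <= m by rewrite ler0n.
rewrite inradius_right_triangle; [by field | nra | nra | nra | ring].
Qed.
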